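(* Let $\mathcal{H}$ be a finite set of hypotheses and $\mathcal{R}$ a finite collection of decision regions $r\subseteq\mathcal{H}$. Let $k_{\mathrm{iff}}$ be the largest cardinality of a set $R\subseteq\mathcal{R}$ such that for every $r\in R$ there is a hypothesis $h$ with $h\notin r$ and $h\in r'$ for all $r'\in R\setminus\{r\}$. Let $k_{\mathrm{as}}=m+1$, where $m$ is the largest cardinality of a set $R\subseteq\mathcal{R}$ such that (1) some hypothesis $\tilde h$ lies in every region of $R$, and (2) for every $r\in R$ there is a hypothesis $h$ with $h\notin r$ and $h\in r'$ for all $r'\in R\setminus\{r\}$. Then $k_{\mathrm{as}}\ge k_{\mathrm{iff}}$. *)

From mathcomp Require Import all_boot.
Set Implicit Arguments. Unset Strict Implicit. Unset Printing Implicit Defensive.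

Definition separated (H : finType) (R : {set {set H}}) : bool :=
  [forall r in R, exists h : H,
      (h \notin r) && [forall r' in R :\ r, h \in r']].

Definition common_point (H : finType) (R : {set {set H}}) : bool :=
  [exists ht : H, forall r in R, ht \in r].

Definition k_iff (H : finType) (calR : {set {set H}}) : nat :=
  \max_(R in powerset calR | separated R) #|R|.

Definition m_as (H : finType) (calR : {set {set H}}) : nat :=
  \max_(R in powerset calR | common_point R && separated R) #|R|.

Definition k_as (H : finType) (calR : {set {set H}}) : nat := (m_as calR).+1.

From mathcomp Require Import all_boot.

(* The separation witness of any region r0 of a separated family R lies in
   every other region, so R :\ r0 is a separated family with a common point;
   it has #|R| - 1 elements, whence k_iff <= m_as + 1. *)

Section Separated.

Context {H : finType}.
Implicit Types (R : {set {set H}}) (r : {set H}).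

Lemma separatedP R :
  reflect (forall r, r \in R ->
             exists2 h, h \notin r & forall r', r' \in R :\ r -> h \in r')
          (separated R).
Proof.
apply: (iffP forallP) => [sepR r rR | sepR r].
  have /existsP [h /andP [hr /forall_inP hR]] := implyP (sepR r) rR.
  by exists h.
apply/implyP => /sepR [h hr hR].
by apply/existsP; exists h; rewrite hr; apply/forall_inP.
Qed.

Lemma separatedS {R1 R2} : R1 \subset R2 -> separated R2 -> separated R1.
Proof.
move=> /subsetP sR12 /separatedP sepR2; apply/separatedP => r rR1.
have [h hr hR2] := sepR2 r (sR12 r rR1).
exists h => // r' /setD1P [r'r r'R1].
by apply: hR2; rewrite in_setD1 r'r sR12.
Qed.

Lemma separated_common_point_setD1 R r0 :
  separated R -> r0 \in R -> common_point (R :\ r0).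
Proof.
move=> /separatedP sepR /sepR [h _ hR].
by apply/existsP; exists h; apply/forall_inP.
Qed.

End Separated.

Theorem proposition2 (H : finType) (calR : {set {set H}}) :
  k_iff calR <= k_as calR.
Proof.
apply/bigmax_leqP => R; rewrite inE => /andP [sRcalR sepR].
have [-> | [r0 r0R]] := set_0Vmem R; first by rewrite cards0.
rewrite (cardsD1 r0 R) r0R ltnS.
apply: (@leq_bigmax_cond _ _ _ (R :\ r0)).
rewrite inE (subset_trans (subsetDl R [set r0]) sRcalR) /=.
by rewrite separated_common_point_setD1 // (separatedS (subsetDl R [set r0])).
Qed.
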